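(* On the open set $\Omega\subset\mathbb{R}^3$ where $u,v,w$ are pairwise distinct, consider the system $$u'=\frac{1}{u-w},\qquad v'=\frac{1}{v-w},\qquad w'=\frac1{w-u}+\frac1{w-v},$$ written $\mathbf{u}'=\mathbf{U}(\mathbf{u})$. Define $$P_{n1}(\mathbf{u})=\frac{2}{3(u-v)^2(v-w)(w-u)}\begin{pmatrix}0&1&-1\\-1&0&1\\1&-1&0\end{pmatrix},\qquad H_n(\mathbf{u})=\frac14(u+v-2w)(u-v)^3,$$ $$P_{n2}(\mathbf{u})=\frac16\frac{u-v}{(v-w)(w-u)}\begin{pmatrix}0&2&1\\-2&0&-1\\-1&1&0\end{pmatrix}+\frac12\Big[\frac1{w-u}-\frac1{v-w}\Big]\begin{pmatrix}0&0&-1\\0&0&-1\\1&1&0\end{pmatrix},$$ and $H^{(1)}(\mathbf{u})=u+v+w$. Then $P_{n1}$ and $P_{n2}$ are compatible Poisson matrices on $\Omega$ and $$\mathbf{u}'=P_{n1}(\mathbf{u})\nabla H_n(\mathbf{u})=P_{n2}(\mathbf{u})\nabla H^{(1)}(\mathbf{u}).$$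
   Context: A smooth skew-symmetric matrix-valued function $P$ on an open subset of $\mathbb{R}^3$ is a Poisson matrix if the bracket $\{f,g\}=(\nabla f)^{T}P\,\nabla g$ satisfies the Jacobi identity; two Poisson matrices are compatible if every linear combination of them is again a Poisson matrix. The system describes two bodies at $u,v$ that do not interact with each other but each interact with a third body at $w$. *)

From Stdlib Require Import Reals.
From Coquelicot Require Import Coquelicot.
Open Scope R_scope.

Inductive idx := i1 | i2 | i3.

Definition idx_eqb (i j : idx) : bool :=
  match i, j with
  | i1, i1 | i2, i2 | i3, i3 => true
  | _, _ => false
  end.

Definition pt := idx -> R.

Definition pu (x : pt) := x i1.
Definition pv (x : pt) := x i2.
Definition pw (x : pt) := x i3.

Definition upd (x : pt) (i : idx) (t : R) : pt :=
  fun j => if idx_eqb i j then t else x j.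

Definition partial (i : idx) (f : pt -> R) (x : pt) : R :=
  Derive (fun t => f (upd x i t)) (x i).

Definition has_partial (i : idx) (f : pt -> R) (x : pt) : Prop :=
  ex_derive (fun t => f (upd x i t)) (x i).

Definition cont_on (D : pt -> Prop) (f : pt -> R) : Prop :=
  forall x, D x -> forall eps, 0 < eps -> exists delta, 0 < delta /\
    forall y, (forall i, Rabs (y i - x i) < delta) -> Rabs (f y - f x) < eps.

Fixpoint Ck (k : nat) (D : pt -> Prop) (f : pt -> R) : Prop :=
  match k with
  | O => cont_on D f
  | S k' => (forall i x, D x -> has_partial i f x) /\
            (cont_on D f) /\ (forall i, Ck k' D (partial i f))
  end.

Definition smooth (D : pt -> Prop) (f : pt -> R) : Prop := forall k, Ck k D f.

Definition sum3 (F : idx -> R) : R := F i1 + F i2 + F i3.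

Definition matfun := pt -> idx -> idx -> R.

Definition bracket (P : matfun) (f g : pt -> R) : pt -> R :=
  fun x => sum3 (fun i => sum3 (fun j => partial i f x * P x i j * partial j g x)).

Definition is_poisson (D : pt -> Prop) (P : matfun) : Prop :=
  (forall i j, smooth D (fun x => P x i j)) /\
  (forall x, D x -> forall i j, P x i j = - P x j i) /\
  (forall f g h, smooth D f -> smooth D g -> smooth D h ->
     forall x, D x ->
       bracket P f (bracket P g h) x + bracket P g (bracket P h f) x
       + bracket P h (bracket P f g) x = 0).

Definition compatible (D : pt -> Prop) (P1 P2 : matfun) : Prop :=
  forall a b : R, is_poisson D (fun x i j => a * P1 x i j + b * P2 x i j).

Definition Omega (x : pt) : Prop :=
  pu x <> pv x /\ pv x <> pw x /\ pw x <> pu x.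

Definition Ufield (x : pt) (i : idx) : R :=
  let u := pu x in let v := pv x in let w := pw x in
  match i with
  | i1 => 1 / (u - w)
  | i2 => 1 / (v - w)
  | i3 => 1 / (w - u) + 1 / (w - v)
  end.

Definition M1 (i j : idx) : R :=
  match i, j with
  | i1, i2 => 1 | i1, i3 => -1
  | i2, i1 => -1 | i2, i3 => 1
  | i3, i1 => 1 | i3, i2 => -1
  | _, _ => 0
  end.

Definition A2 (i j : idx) : R :=
  match i, j with
  | i1, i2 => 2 | i1, i3 => 1
  | i2, i1 => -2 | i2, i3 => -1
  | i3, i1 => -1 | i3, i2 => 1
  | _, _ => 0
  end.

Definition B2 (i j : idx) : R :=
  match i, j with
  | i1, i3 => -1 | i2, i3 => -1
  | i3, i1 => 1 | i3, i2 => 1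
  | _, _ => 0
  end.

Definition Pn1 : matfun := fun x i j =>
  let u := pu x in let v := pv x in let w := pw x in
  2 / (3 * (u - v) ^ 2 * (v - w) * (w - u)) * M1 i j.

Definition Pn2 : matfun := fun x i j =>
  let u := pu x in let v := pv x in let w := pw x in
  1 / 6 * ((u - v) / ((v - w) * (w - u))) * A2 i j
  + 1 / 2 * (1 / (w - u) - 1 / (v - w)) * B2 i j.

Definition Hn (x : pt) : R :=
  let u := pu x in let v := pv x in let w := pw x in
  1 / 4 * (u + v - 2 * w) * (u - v) ^ 3.

Definition H1 (x : pt) : R := pu x + pv x + pw x.

(* In dimension three the Jacobiator of a skew-symmetric matrix P factors as
   {f,{g,h}} + {g,{h,f}} + {h,{f,g}} = Phi(P) det(grad f, grad g, grad h), where
   Phi(P) = sum_j (P_1j d_j P_23 + P_2j d_j P_31 + P_3j d_j P_12); the second derivatives of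
   f, g, h cancel by Schwarz's theorem.  So P is Poisson exactly when Phi(P) vanishes.
   The entries of a Pn1 + b Pn2 are polynomials in u, v, w and in the reciprocals of
   u - v, v - w, w - u; differentiating them symbolically turns Phi(a Pn1 + b Pn2) = 0 into a
   rational identity, checked by [field], and shows that the entries are smooth on Omega.
   Taking (a, b) = (1, 0), (0, 1) and arbitrary gives both Poisson structures and their
   compatibility; the Hamiltonian forms of the vector field are direct computations. *)

From Stdlib Require Import Reals Lra FunctionalExtensionality.
From Coquelicot Require Import Coquelicot.
Open Scope R_scope.

Definition pt_UniformSpace := fct_UniformSpace idx R_UniformSpace.

Lemma idx_eq_dec (i j : idx) : {i = j} + {i <> j}.
Proof. decide equality. Qed.

Lemma upd_eq x i t : upd x i t i = t.
Proof. unfold upd; destruct i; reflexivity. Qed.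

Lemma upd_id x i : upd x i (x i) = x.
Proof. extensionality j; unfold upd; destruct i, j; reflexivity. Qed.

Lemma upd_upd x i s t : upd (upd x i s) i t = upd x i t.
Proof. extensionality j; unfold upd; destruct i, j; reflexivity. Qed.

Lemma upd_comm x i j s t : i <> j -> upd (upd x i s) j t = upd (upd x j t) i s.
Proof. intros Hij; extensionality k; unfold upd; destruct i, j, k; simpl; congruence. Qed.

Lemma ball_upd (x : pt) i t (eps : R) :
  Rabs (t - x i) < eps -> @ball pt_UniformSpace x eps (upd x i t).
Proof.
  intros Ht k; assert (H0 : 0 < eps) by (eapply Rle_lt_trans; [apply Rabs_pos|exact Ht]).
  change (Rabs (upd x i t k - x k) < eps).
  unfold upd; destruct i, k; simpl; auto; rewrite Rminus_diag, Rabs_R0; exact H0.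
Qed.

Lemma ball_upd2 (x : pt) i j s t (eps : R) :
  Rabs (s - x i) < eps -> Rabs (t - x j) < eps ->
  @ball pt_UniformSpace x eps (upd (upd x i s) j t).
Proof.
  intros Hs Ht k; assert (H0 : 0 < eps) by (eapply Rle_lt_trans; [apply Rabs_pos|exact Hs]).
  change (Rabs (upd (upd x i s) j t k - x k) < eps).
  unfold upd; destruct i, j, k; simpl; auto; rewrite Rminus_diag, Rabs_R0; exact H0.
Qed.

Lemma locally_upd (D : pt -> Prop) x i :
  @locally pt_UniformSpace x D -> locally (x i) (fun t => D (upd x i t)).
Proof. intros [eps HD]; exists eps; intros t Ht; apply HD, ball_upd, Ht. Qed.

Lemma locally_2d_upd2 (D : pt -> Prop) x i j :
  @locally pt_UniformSpace x D -> locally_2d (fun s t => D (upd (upd x i s) j t)) (x i) (x j).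
Proof. intros [eps HD]; exists eps; intros s t Hs Ht; apply HD, ball_upd2; assumption. Qed.

Lemma continuous_coord (x : pt) i :
  @continuous pt_UniformSpace R_UniformSpace (fun z : pt => z i) x.
Proof. intros P [eps HP]; exists eps; intros y Hy; apply HP, Hy. Qed.

Lemma continuous_coord_diff (x : pt) i j :
  @continuous pt_UniformSpace R_UniformSpace (fun z : pt => z i - z j) x.
Proof.
  apply (continuous_minus (U := pt_UniformSpace) (V := R_NormedModule)
           (fun z : pt => z i) (fun z : pt => z j)); apply continuous_coord.
Qed.

Lemma Omega_neq y i j : Omega y -> i <> j -> y i <> y j.
Proof.
  intros (Huv & Hvw & Hwu); unfold pu, pv, pw in *.
  destruct i, j; congruence || (intros E; symmetry in E; contradiction).
Qed.

Lemma Omega_open : @open pt_UniformSpace Omega.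
Proof.
  assert (Hdiff : forall i j, @open pt_UniformSpace (fun z : pt => z i - z j <> 0)).
  { intros i j.
    apply (open_comp (U := R_UniformSpace) (fun z : pt => z i - z j) (fun r => r <> 0)).
    - intros x _; apply continuous_coord_diff.
    - apply open_neq. }
  apply (open_ext (fun z : pt => z i1 - z i2 <> 0 /\ (z i2 - z i3 <> 0 /\ z i3 - z i1 <> 0))).
  - intros z; unfold Omega, pu, pv, pw; split.
    + intros (H12 & H23 & H31); repeat split; apply Rminus_not_eq; assumption.
    + intros (H12 & H23 & H31); repeat split; apply Rminus_eq_contra; assumption.
  - repeat apply open_and; apply Hdiff.
Qed.

(** * Smooth functions on open sets *)

Lemma partial_upd G y i s : partial i G (upd y i s) = Derive (fun z => G (upd y i z)) s.
Proof.
  unfold partial; rewrite upd_eq; apply Derive_ext; intros z; rewrite upd_upd; reflexivity.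
Qed.

Lemma has_partial_upd G y i s :
  has_partial i G (upd y i s) -> ex_derive (fun z => G (upd y i z)) s.
Proof.
  unfold has_partial; rewrite upd_eq; apply ex_derive_ext; intros z; rewrite upd_upd; reflexivity.
Qed.

Lemma partial_upd2 G x i j s t : i <> j ->
  partial i G (upd (upd x i s) j t) = Derive (fun z => G (upd (upd x i z) j t)) s.
Proof.
  intros Hij; rewrite upd_comm, partial_upd by exact Hij.
  apply Derive_ext; intros z; rewrite (upd_comm x i j) by exact Hij; reflexivity.
Qed.

Lemma has_partial_upd2 G x i j s t : i <> j ->
  has_partial i G (upd (upd x i s) j t) -> ex_derive (fun z => G (upd (upd x i z) j t)) s.
Proof.
  intros Hij; rewrite upd_comm by exact Hij; intros HG; apply has_partial_upd in HG.
  eapply ex_derive_ext; [|exact HG]; intros z; simpl; rewrite (upd_comm x i j) by exact Hij.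
  reflexivity.
Qed.

Section SmoothOnOpen.

Variable D : pt -> Prop.
Hypothesis D_open : @open pt_UniformSpace D.

Lemma smooth_has_partial f i x : smooth D f -> D x -> has_partial i f x.
Proof. intros Hf Hx; exact (proj1 (Hf 1%nat) i x Hx). Qed.

Lemma smooth_partial f i : smooth D f -> smooth D (partial i f).
Proof. intros Hf k; exact (proj2 (proj2 (Hf (S k))) i). Qed.

Lemma smooth_of_partial_closed (S : (pt -> R) -> Prop) :
  (forall F, S F -> cont_on D F) ->
  (forall F i x, S F -> D x -> has_partial i F x) ->
  (forall F i, S F -> S (partial i F)) ->
  forall F, S F -> smooth D F.
Proof.
  intros Scont Shas Spartial F HF k; revert F HF.
  induction k as [|k IHk]; intros F HF; simpl.
  - apply Scont, HF.
  - repeat split; eauto.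
Qed.

Lemma cont_on_ext (F G : pt -> R) :
  (forall y, D y -> F y = G y) ->
  (forall x, D x -> @continuous pt_UniformSpace R_UniformSpace G x) ->
  cont_on D F.
Proof.
  intros HFG HG x Hx eps Heps.
  destruct (filter_and _ _ (proj1 (filterlim_locally _ _) (HG x Hx) (mkposreal eps Heps))
             (D_open x Hx)) as [[delta Hdelta] Hnear].
  exists delta; split; [exact Hdelta|]; intros y Hy.
  destruct (Hnear y Hy) as [Hball HDy].
  rewrite (HFG y HDy), (HFG x Hx); exact Hball.
Qed.

Lemma partial_ext_on F G i x :
  (forall y, D y -> F y = G y) -> D x -> partial i F x = partial i G x.
Proof.
  intros HFG Hx; apply Derive_ext_loc.
  apply (filter_imp (fun t => D (upd x i t))); [intros t Ht; apply HFG, Ht|].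
  apply locally_upd, D_open, Hx.
Qed.

Lemma has_partial_ext_on F G i x :
  (forall y, D y -> F y = G y) -> D x -> has_partial i G x -> has_partial i F x.
Proof.
  intros HFG Hx; apply ex_derive_ext_loc.
  apply (filter_imp (fun t => D (upd x i t))); [intros t Ht; symmetry; apply HFG, Ht|].
  apply locally_upd, D_open, Hx.
Qed.

Lemma continuity_2d_upd2 F x i j : cont_on D F -> D x ->
  continuity_2d_pt (fun s t => F (upd (upd x i s) j t)) (x i) (x j).
Proof.
  intros HF Hx eps.
  destruct (HF x Hx eps (cond_pos eps)) as [delta [Hdelta Hnear]].
  exists (mkposreal delta Hdelta); intros s t Hs Ht; simpl in Hs, Ht.
  rewrite !upd_id; apply Hnear, (ball_upd2 x i j s t delta Hs Ht).
Qed.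

Lemma partial_comm f i j x : smooth D f -> D x ->
  partial j (partial i f) x = partial i (partial j f) x.
Proof.
  intros Hf Hx.
  destruct (idx_eq_dec i j) as [<-|Hij]; [reflexivity|].
  set (w s t := upd (upd x i s) j t).
  assert (Hwi : forall G s t, partial i G (w s t) = Derive (fun z => G (w z t)) s)
    by (intros; apply partial_upd2, Hij).
  assert (Hwj : forall G s t, partial j G (w s t) = Derive (fun z => G (w s z)) t)
    by (intros; apply partial_upd).
  assert (Hexi : forall G s t, D (w s t) -> smooth D G -> ex_derive (fun z => G (w z t)) s)
    by (intros; apply has_partial_upd2, smooth_has_partial; assumption).
  assert (Hexj : forall G s t, D (w s t) -> smooth D G -> ex_derive (fun z => G (w s z)) t)
    by (intros; apply has_partial_upd, smooth_has_partial; assumption).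
  assert (Hij_mixed : forall s t,
    Derive (fun z => Derive (fun u => f (w z u)) t) s = partial i (partial j f) (w s t)).
  { intros s t; rewrite Hwi; apply Derive_ext; intros z; rewrite Hwj; reflexivity. }
  assert (Hji_mixed : forall s t,
    Derive (fun z => Derive (fun u => f (w u z)) s) t = partial j (partial i f) (w s t)).
  { intros s t; rewrite Hwj; apply Derive_ext; intros z; rewrite Hwi; reflexivity. }
  assert (Hwx : w (x i) (x j) = x) by (unfold w; rewrite !upd_id; reflexivity).
  rewrite <- Hwx, <- Hij_mixed, <- Hji_mixed; symmetry.
  apply (Schwarz (fun s t => f (w s t))).
  - destruct (locally_2d_upd2 D x i j (D_open x Hx)) as [delta Hdelta].
    exists delta; intros s t Hs Ht; specialize (Hdelta s t Hs Ht).
    fold (w s t) in Hdelta; repeat split.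
    + apply Hexi; assumption.
    + apply Hexj; assumption.
    + apply (ex_derive_ext (fun z => partial j f (w z t))); [intros z; apply Hwj|].
      apply (Hexi (partial j f)); [|apply smooth_partial]; assumption.
    + apply (ex_derive_ext (fun z => partial i f (w s z))); [intros z; apply Hwi|].
      apply (Hexj (partial i f)); [|apply smooth_partial]; assumption.
  - eapply continuity_2d_pt_ext; [intros s t; symmetry; apply Hij_mixed|].
    apply continuity_2d_upd2; [apply (smooth_partial _ i (smooth_partial _ j Hf) 0%nat)|exact Hx].
  - eapply continuity_2d_pt_ext; [intros s t; symmetry; apply Hji_mixed|].
    apply continuity_2d_upd2; [apply (smooth_partial _ j (smooth_partial _ i Hf) 0%nat)|exact Hx].
Qed.

End SmoothOnOpen.

(** * Rational functions with poles on the diagonals *)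

(* [RInvDiff i i] evaluates to the junk value [/ 0]; it is constant, which agrees with its
   formal derivative. *)
Inductive rexpr :=
  | RConst (r : R)
  | RCoord (i : idx)
  | RInvDiff (i j : idx)
  | RAdd (a b : rexpr)
  | RMul (a b : rexpr).

Fixpoint reval (e : rexpr) (x : pt) : R :=
  match e with
  | RConst r => r
  | RCoord i => x i
  | RInvDiff i j => / (x i - x j)
  | RAdd a b => reval a x + reval b x
  | RMul a b => reval a x * reval b x
  end.

Definition kronecker (i k : idx) : R := if idx_eqb i k then 1 else 0.

Fixpoint rderiv (k : idx) (e : rexpr) : rexpr :=
  match e with
  | RConst _ => RConst 0
  | RCoord i => RConst (kronecker i k)
  | RInvDiff i j =>
      RMul (RConst (kronecker j k - kronecker i k)) (RMul (RInvDiff i j) (RInvDiff i j))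
  | RAdd a b => RAdd (rderiv k a) (rderiv k b)
  | RMul a b => RAdd (RMul (rderiv k a) b) (RMul a (rderiv k b))
  end.

Lemma is_derive_upd_coord (y : pt) k i : is_derive (fun t => upd y k t i) (y k) (kronecker i k).
Proof. unfold upd, kronecker; destruct k, i; simpl; auto_derive; auto. Qed.

Lemma is_derive_reval e y k : Omega y ->
  is_derive (fun t => reval e (upd y k t)) (y k) (reval (rderiv k e) y).
Proof.
  intros Hy; induction e as [r|i|i j|a IHa b IHb|a IHa b IHb]; simpl.
  - auto_derive; auto.
  - apply is_derive_upd_coord.
  - destruct (idx_eq_dec i j) as [<-|Hij].
    + apply (is_derive_ext (fun _ => / 0)); [intros t; rewrite Rminus_diag; reflexivity|].
      replace (_ * _) with 0 by ring; auto_derive; auto.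
    + assert (Hyij : y i - y j <> 0) by (apply Rminus_eq_contra, Omega_neq; assumption).
      assert (Hdiff : is_derive (fun t => upd y k t i - upd y k t j) (y k)
                        (kronecker i k - kronecker j k)).
      { apply (is_derive_minus (fun t => upd y k t i) (fun t => upd y k t j));
          apply is_derive_upd_coord. }
      pose proof (is_derive_inv _ _ _ Hdiff) as Hinv; cbv beta in Hinv; rewrite upd_id in Hinv.
      replace (_ * _) with (- (kronecker i k - kronecker j k) / (y i - y j) ^ 2)
        by (field; exact Hyij).
      exact (Hinv Hyij).
  - apply (is_derive_plus (fun t => reval a (upd y k t)) (fun t => reval b (upd y k t)));
      assumption.
  - pose proof (is_derive_mult _ _ _ _ _ IHa IHb ltac:(intros; apply Rmult_comm)) as Hmul.
    cbv beta in Hmul; rewrite !upd_id in Hmul; exact Hmul.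
Qed.

Lemma continuous_reval e y :
  Omega y -> @continuous pt_UniformSpace R_UniformSpace (reval e) y.
Proof.
  intros Hy; induction e as [r|i|i j|a IHa b IHb|a IHa b IHb]; simpl.
  - apply (continuous_const (U := pt_UniformSpace)).
  - apply continuous_coord.
  - destruct (idx_eq_dec i j) as [<-|Hij].
    + apply (continuous_ext (T := pt_UniformSpace) (U := R_UniformSpace) (fun _ : pt => / 0)).
      { intros z; rewrite Rminus_diag; reflexivity. }
      apply (continuous_const (U := pt_UniformSpace)).
    + apply (continuous_comp (U := pt_UniformSpace) (fun z : pt => z i - z j) Rinv).
      * apply continuous_coord_diff.
      * apply continuous_Rinv, Rminus_eq_contra, Omega_neq; assumption.
  - apply (continuous_plus (U := pt_UniformSpace) (V := R_NormedModule) (reval a) (reval b));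
      assumption.
  - apply (continuous_mult (U := pt_UniformSpace) (K := R_AbsRing) (reval a) (reval b));
      assumption.
Qed.

Definition rational (F : pt -> R) : Prop := exists e, forall y, Omega y -> F y = reval e y.

Lemma partial_rational F e k x : (forall y, Omega y -> F y = reval e y) -> Omega x ->
  partial k F x = reval (rderiv k e) x.
Proof.
  intros HF Hx; rewrite (partial_ext_on Omega Omega_open F (reval e)) by assumption.
  apply is_derive_unique, is_derive_reval, Hx.
Qed.

Lemma rational_smooth F : rational F -> smooth Omega F.
Proof.
  apply smooth_of_partial_closed.
  - intros G [e He]; apply (cont_on_ext Omega Omega_open G (reval e) He).
    intros x Hx; apply continuous_reval, Hx.
  - intros G k x [e He] Hx.
    apply (has_partial_ext_on Omega Omega_open G (reval e) k x He Hx).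
    eexists; apply is_derive_reval, Hx.
  - intros G k [e He]; exists (rderiv k e); intros y Hy; apply partial_rational; assumption.
Qed.

(** * The Jacobi identity in dimension three *)

Lemma sum3_ext F G : (forall i, F i = G i) -> sum3 F = sum3 G.
Proof. intros H; unfold sum3; rewrite !H; reflexivity. Qed.

Lemma is_derive_sum3 (F : idx -> R -> R) dF t :
  (forall k, is_derive (F k) t (dF k)) -> is_derive (fun s => sum3 (fun k => F k s)) t (sum3 dF).
Proof.
  intros H; exact (is_derive_plus _ _ _ _ _ (is_derive_plus _ _ _ _ _ (H i1) (H i2)) (H i3)).
Qed.

Lemma is_derive_mult3 (A B C : R -> R) a b c t :
  is_derive A t a -> is_derive B t b -> is_derive C t c ->
  is_derive (fun s => A s * B s * C s) t (a * B t * C t + A t * b * C t + A t * B t * c).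
Proof.
  intros HA HB HC.
  assert (Hcomm : forall n m : R, n * m = m * n) by (intros; apply Rmult_comm).
  pose proof (is_derive_mult _ _ _ _ _ (is_derive_mult _ _ _ _ _ HA HB Hcomm) HC Hcomm) as Hmul.
  replace (a * B t * C t + A t * b * C t + A t * B t * c) with
    (plus (mult (plus (mult a (B t)) (mult (A t) b)) (C t)) (mult (mult (A t) (B t)) c))
    by (simpl; unfold plus, mult; simpl; ring).
  exact Hmul.
Qed.

Lemma partial_bracket (P : matfun) g h x j :
  (forall k, has_partial j (partial k g) x) -> (forall k, has_partial j (partial k h) x) ->
  (forall k l, has_partial j (fun y => P y k l) x) ->
  partial j (bracket P g h) x = sum3 (fun k => sum3 (fun l =>
     partial j (partial k g) x * P x k l * partial l h x
   + partial k g x * partial j (fun y => P y k l) x * partial l h x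
   + partial k g x * P x k l * partial j (partial l h) x)).
Proof.
  intros Hg Hh HP; apply is_derive_unique; unfold bracket.
  apply (is_derive_sum3 (fun k t => sum3 (fun l =>
    partial k g (upd x j t) * P (upd x j t) k l * partial l h (upd x j t)))); intros k.
  apply (is_derive_sum3 (fun l t =>
    partial k g (upd x j t) * P (upd x j t) k l * partial l h (upd x j t))); intros l.
  pose proof (is_derive_mult3 _ _ _ _ _ _ _ (Derive_correct _ _ (Hg k))
                (Derive_correct _ _ (HP k l)) (Derive_correct _ _ (Hh l))) as Hmul.
  cbv beta in Hmul; rewrite !upd_id in Hmul; exact Hmul.
Qed.

Lemma bracket_bracket (P : matfun) f g h x :
  (forall k j, has_partial j (partial k g) x) -> (forall k j, has_partial j (partial k h) x) ->
  (forall k l j, has_partial j (fun y => P y k l) x) ->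
  bracket P f (bracket P g h) x =
  sum3 (fun i => sum3 (fun j => partial i f x * P x i j * sum3 (fun k => sum3 (fun l =>
     partial j (partial k g) x * P x k l * partial l h x
   + partial k g x * partial j (fun y => P y k l) x * partial l h x
   + partial k g x * P x k l * partial j (partial l h) x)))).
Proof.
  intros Hg Hh HP; unfold bracket at 1.
  apply sum3_ext; intros i; apply sum3_ext; intros j.
  rewrite partial_bracket; auto.
Qed.

Definition jacobiator (P : matfun) f g h x : R :=
  bracket P f (bracket P g h) x + bracket P g (bracket P h f) x + bracket P h (bracket P f g) x.

(* Writing [p = (P23, P31, P12)] for a skew-symmetric [P], this is [- p . curl p]. *)
Definition jacobi_factor (P : matfun) x : R := sum3 (fun j =>
   P x i1 j * partial j (fun y => P y i2 i3) x
 + P x i2 j * partial j (fun y => P y i3 i1) x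
 + P x i3 j * partial j (fun y => P y i1 i2) x).

Definition det_grad (f g h : pt -> R) x : R :=
  let f1 := partial i1 f x in let f2 := partial i2 f x in let f3 := partial i3 f x in
  let g1 := partial i1 g x in let g2 := partial i2 g x in let g3 := partial i3 g x in
  let h1 := partial i1 h x in let h2 := partial i2 h x in let h3 := partial i3 h x in
  f1 * (g2 * h3 - g3 * h2) - f2 * (g1 * h3 - g3 * h1) + f3 * (g1 * h2 - g2 * h1).

Definition sym_hessian (g : pt -> R) x : Prop :=
  (forall k j, has_partial j (partial k g) x) /\
  (forall k j, partial j (partial k g) x = partial k (partial j g) x).

Lemma partial_opp (F : pt -> R) j x : partial j (fun y => - F y) x = - partial j F x.
Proof. apply Derive_opp. Qed.

Lemma jacobiator_skew (P : matfun) f g h x :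
  (forall y k l, P y l k = - P y k l) ->
  (forall k l j, has_partial j (fun y => P y k l) x) ->
  sym_hessian f x -> sym_hessian g x -> sym_hessian h x ->
  jacobiator P f g h x = jacobi_factor P x * det_grad f g h x.
Proof.
  intros Hskew HP [Hf Hfsym] [Hg Hgsym] [Hh Hhsym]; unfold jacobiator.
  rewrite !bracket_bracket by assumption.
  assert (HdP : forall k l j, partial j (fun y => P y l k) x = - partial j (fun y => P y k l) x).
  { intros k l j; rewrite <- partial_opp; f_equal; extensionality y; apply Hskew. }
  assert (HdP0 : forall k j, partial j (fun y => P y k k) x = 0).
  { intros k j; pose proof (HdP k k j); lra. }
  assert (HP0 : forall k, P x k k = 0).
  { intros k; pose proof (Hskew x k k); lra. }
  unfold jacobi_factor, det_grad, sum3.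
  rewrite (Hfsym i1 i2), (Hfsym i1 i3), (Hfsym i2 i3), (Hgsym i1 i2), (Hgsym i1 i3),
    (Hgsym i2 i3), (Hhsym i1 i2), (Hhsym i1 i3), (Hhsym i2 i3).
  rewrite !(HdP i1 i2), !(HdP i1 i3), !(HdP i2 i3), !HdP0, !HP0,
    !(Hskew x i1 i2), !(Hskew x i1 i3), !(Hskew x i2 i3).
  ring.
Qed.

Section PoissonCriterion.

Variable D : pt -> Prop.
Hypothesis D_open : @open pt_UniformSpace D.

Lemma smooth_sym_hessian f x : smooth D f -> D x -> sym_hessian f x.
Proof.
  intros Hf Hx; split; intros k j.
  - apply (smooth_has_partial D); [apply smooth_partial, Hf | exact Hx].
  - apply (partial_comm D); assumption.
Qed.

Lemma is_poisson_of_jacobi_factor (P : matfun) :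
  (forall i j, smooth D (fun x => P x i j)) ->
  (forall y k l, P y l k = - P y k l) ->
  (forall x, D x -> jacobi_factor P x = 0) ->
  is_poisson D P.
Proof.
  intros Hsmooth Hskew Hfactor; split; [exact Hsmooth | split].
  - intros x _ i j; apply Hskew.
  - intros f g h Hf Hg Hh x Hx.
    assert (HP : forall k l j, has_partial j (fun y => P y k l) x)
      by (intros k l j; apply (smooth_has_partial D); auto).
    change (jacobiator P f g h x = 0).
    rewrite (jacobiator_skew P f g h x Hskew HP) by (apply smooth_sym_hessian; assumption).
    rewrite Hfactor by exact Hx; ring.
Qed.

End PoissonCriterion.

(** * The pencil a Pn1 + b Pn2 *)

Ltac Omega_denominators :=
  repeat split; intros ?;
  match goal with
  | H : Omega _ |- _ =>
      destruct H as (Huv & Hvw & Hwu); unfold pu, pv, pw in *;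
      first [apply Huv; lra | apply Hvw; lra | apply Hwu; lra]
  end.

Definition pencil (a b : R) : matfun := fun x i j => a * Pn1 x i j + b * Pn2 x i j.

Definition pencil_rexpr (a b : R) (k l : idx) : rexpr :=
  let uv := RInvDiff i1 i2 in let vw := RInvDiff i2 i3 in let wu := RInvDiff i3 i1 in
  RAdd (RMul (RConst (2 / 3 * a * M1 k l)) (RMul uv (RMul uv (RMul vw wu))))
       (RAdd (RMul (RConst (1 / 6 * b * A2 k l))
                   (RMul (RAdd (RCoord i1) (RMul (RConst (-1)) (RCoord i2))) (RMul vw wu)))
             (RMul (RConst (1 / 2 * b * B2 k l)) (RAdd wu (RMul (RConst (-1)) vw)))).

Lemma pencil_reval a b k l y : Omega y -> pencil a b y k l = reval (pencil_rexpr a b k l) y.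
Proof.
  intros Hy; unfold pencil, Pn1, Pn2, pu, pv, pw; simpl.
  field; Omega_denominators.
Qed.

Lemma pencil_skew a b y k l : pencil a b y l k = - pencil a b y k l.
Proof. unfold pencil, Pn1, Pn2; destruct k, l; simpl; ring. Qed.

Lemma jacobi_factor_pencil a b x : Omega x -> jacobi_factor (pencil a b) x = 0.
Proof.
  intros Hx; unfold jacobi_factor, sum3.
  rewrite !(partial_rational _ _ _ _ (pencil_reval a b _ _)) by exact Hx.
  unfold pencil, Pn1, Pn2, pu, pv, pw; simpl; unfold kronecker; simpl.
  field; Omega_denominators.
Qed.

Lemma pencil_poisson a b : is_poisson Omega (pencil a b).
Proof.
  apply is_poisson_of_jacobi_factor.
  - exact Omega_open.
  - intros k l; apply rational_smooth; exists (pencil_rexpr a b k l); apply pencil_reval.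
  - apply pencil_skew.
  - apply jacobi_factor_pencil.
Qed.

Lemma partial_Hn x j : partial j Hn x =
  match j with
  | i1 => 1 / 4 * (pu x - pv x) ^ 3 + 3 / 4 * (pu x + pv x - 2 * pw x) * (pu x - pv x) ^ 2
  | i2 => 1 / 4 * (pu x - pv x) ^ 3 - 3 / 4 * (pu x + pv x - 2 * pw x) * (pu x - pv x) ^ 2
  | i3 => - 1 / 2 * (pu x - pv x) ^ 3
  end.
Proof.
  unfold partial, Hn, pu, pv, pw; apply is_derive_unique.
  destruct j; unfold upd; simpl; auto_derive; auto; field.
Qed.

Lemma partial_H1 x j : partial j H1 x = 1.
Proof.
  unfold partial, H1, pu, pv, pw; apply is_derive_unique.
  destruct j; unfold upd; simpl; auto_derive; auto; ring.
Qed.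

Lemma Ufield_Pn1_Hn x i : Omega x -> Ufield x i = sum3 (fun j => Pn1 x i j * partial j Hn x).
Proof.
  intros Hx; unfold sum3; rewrite !partial_Hn.
  unfold Ufield, Pn1, pu, pv, pw; destruct i; simpl; field; Omega_denominators.
Qed.

Lemma Ufield_Pn2_H1 x i : Omega x -> Ufield x i = sum3 (fun j => Pn2 x i j * partial j H1 x).
Proof.
  intros Hx; unfold sum3; rewrite !partial_H1.
  unfold Ufield, Pn2, pu, pv, pw; destruct i; simpl; field; Omega_denominators.
Qed.

Theorem mainTheorem7 :
  is_poisson Omega Pn1 /\ is_poisson Omega Pn2 /\ compatible Omega Pn1 Pn2 /\
  (forall x, Omega x -> forall i,
     Ufield x i = sum3 (fun j => Pn1 x i j * partial j Hn x) /\
     Ufield x i = sum3 (fun j => Pn2 x i j * partial j H1 x)).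
Proof.
  assert (HPn1 : Pn1 = pencil 1 0).
  { extensionality x; extensionality i; extensionality j; unfold pencil; ring. }
  assert (HPn2 : Pn2 = pencil 0 1).
  { extensionality x; extensionality i; extensionality j; unfold pencil; ring. }
  split; [rewrite HPn1; apply pencil_poisson |].
  split; [rewrite HPn2; apply pencil_poisson |].
  split; [intros a b; apply pencil_poisson |].
  intros x Hx i; split; [apply Ufield_Pn1_Hn | apply Ufield_Pn2_H1]; exact Hx.
Qed.
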